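(* Let $G$ be a group and $S\subseteq G$ a locally maximal product-free set with $|S|=3$. If $\langle S\rangle$ is cyclic, then $|G|\leq 24$.
   Context: A non-empty subset $S$ of a group $G$ is product-free if $ab \notin S$ for all $a, b \in S$. It is locally maximal product-free if it is product-free and is not properly contained in any other product-free subset of $G$. $\langle S \rangle$ denotes the subgroup generated by $S$. *)

From mathcomp Require Import all_boot all_fingroup all_solvable.
Set Implicit Arguments. Unset Strict Implicit. Unset Printing Implicit Defensive.
Local Open Scope group_scope.

Definition product_free (gT : finGroupType) (G : {group gT}) (S : {set gT}) :=
  [/\ S \subset G, S != set0 & forall a b, a \in S -> b \in S -> a * b \notin S].

Definition locally_maximal_product_free (gT : finGroupType) (G : {group gT})
    (S : {set gT}) :=
  product_free G S /\
  forall T : {set gT}, product_free G T -> S \subset T -> T = S.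

From mathcomp Require Import all_boot all_fingroup all_solvable.
From mathcomp Require Import zify.
Set Implicit Arguments. Unset Strict Implicit. Unset Printing Implicit Defensive.

(* Write <<S>> = <[g]> with n = #[g] and S = {g^a, g^b, g^c}.  In Z/n the
   exponents form a generating sum-free set, and local maximality puts every
   residue in s, s + s or s - s, or makes its double lie in s; this bounds n
   by 27, and a finite search over the remaining triples leaves n <= 15.  Any
   x in G outside <[g]> squares into S together with its whole coset <[g]>x,
   so x normalises <[g]>; the search shows that then either n is 8, 10 or 12
   and every such x inverts g, whence |G : <[g]>| <= 2, or n = 6 and S consists
   of odd powers of g.  In the last case every element squares into <[g]>, G
   has exponent 12, a unique involution g^3 and its 3-elements lie in <[g^2]>,
   so a Sylow 2-subgroup is cyclic or quaternion of order at most 8 and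
   |G| divides 24. *)

Definition sum_free_mod n (s : seq nat) :=
  all (fun u => all (fun v => (u + v) %% n \notin s) s) s.

(* [(u + n - v) %% n] is [u - v] modulo [n] as long as [v <= n]. *)
Definition covered_mod n (s : seq nat) i :=
  [|| i \in s,
      has (fun u => has (fun v => ((u + v) %% n == i) || ((u + n - v) %% n == i)) s) s
    | (i + i) %% n \in s].

Definition lmpf_exponents n (s : seq nat) :=
  [&& sum_free_mod n s, foldr gcdn n s == 1 & all (covered_mod n s) (iota 0 n)].

Lemma half_double_mod n i :
  i < n -> i = (i + i) %% n %/ 2 \/ i = ((i + i) %% n + n) %/ 2.
Proof.
move=> lt_in; have [le_n_ii | lt_ii_n] := leqP n (i + i).
  right; rewrite -{1}(subnK le_n_ii) modnDr modn_small; lia.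
by left; rewrite modn_small //; lia.
Qed.

Lemma covered_mod_bound n s :
  all (covered_mod n s) (iota 0 n) -> n <= size s * (2 * size s + 3).
Proof.
move=> /allP cov.
pose sums := [seq (u + v) %% n | u <- s, v <- s].
pose diffs := [seq (u + n - v) %% n | u <- s, v <- s].
pose halves := [seq u %/ 2 | u <- s] ++ [seq (u + n) %/ 2 | u <- s].
have -> : size s * (2 * size s + 3) = size (s ++ sums ++ diffs ++ halves).
  by rewrite !size_cat !size_allpairs !size_map; lia.
rewrite -[n in n <= _](size_iota 0); apply: uniq_leq_size (iota_uniq 0 n) _ => i.
rewrite mem_iota add0n => /andP[_ lt_in]; have := cov i; rewrite mem_iota lt_in.
rewrite !mem_cat => /(_ isT) /or3P[-> // | /hasP[u su /hasP[v sv]] | ii_s].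
  have sum_uv : (u + v) %% n \in sums := allpairs_f _ su sv.
  have diff_uv : (u + n - v) %% n \in diffs := allpairs_f _ su sv.
  by case/orP=> /eqP <-; rewrite ?sum_uv ?diff_uv !orbT.
by have [-> | ->] := half_double_mod lt_in; rewrite (map_f _ ii_s) !orbT.
Qed.

(* For [x] with [g ^ x^-1 = g ^+ k] and [x * x = g ^+ j] in a cyclic group
   [<[g]>] of order [n], [(g ^+ i * x) * (g ^+ i * x) = g ^+ (i + k * i + j)]. *)
Definition coset_squares_in n (s : seq nat) k j :=
  [&& (k * j) %% n == j, (k * k) %% n == 1 %% n
    & all (fun i => (i + k * i + j) %% n \in s) (iota 0 n)].

Definition inverting_or_odd6 n (s : seq nat) k :=
  (n \in [:: 8; 10; 12]) && (k == n.-1) || (n == 6) && all odd s.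

(* The [if]s keep [vm_compute] from evaluating the inner tables eagerly. *)
Definition lmpf_table :=
  all (fun n => all (fun c => all (fun b => all (fun a =>
      let s := [:: a; b; c] in
      if lmpf_exponents n s then
        (n <= 15) && all (fun k => all (fun j =>
          if coset_squares_in n s k j then inverting_or_odd6 n s k else true)
        (iota 0 n)) (iota 0 n)
      else true)
    (iota 0 b)) (iota 0 c)) (iota 0 n)) (iota 0 28).

Lemma lmpf_table_ok : lmpf_table. Proof. by vm_compute. Qed.

Lemma lmpf_exponents3_cases n a b c :
    a < b < c -> c < n -> lmpf_exponents n [:: a; b; c] ->
  n <= 15 /\ forall k j, k < n -> j < n ->
    coset_squares_in n [:: a; b; c] k j -> inverting_or_odd6 n [:: a; b; c] k.
Proof.
move=> /andP[lt_ab lt_bc] lt_cn lmpf.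
have lt_n28 : n < 28 by case/and3P: lmpf => _ _ /covered_mod_bound.
have := lmpf_table_ok => /allP /(_ n); rewrite mem_iota lt_n28 => /(_ isT).
move=> /allP /(_ c); rewrite mem_iota lt_cn => /(_ isT).
move=> /allP /(_ b); rewrite mem_iota lt_bc => /(_ isT).
move=> /allP /(_ a); rewrite mem_iota lt_ab => /(_ isT) /=.
rewrite lmpf => /andP[-> /allP table]; split=> // k j lt_kn lt_jn.
have := table k; rewrite mem_iota lt_kn => /(_ isT) /allP /(_ j).
by rewrite mem_iota lt_jn => /(_ isT); case: ifP.
Qed.

Lemma dvdn_foldr_gcdn m s : foldr gcdn m s %| m /\ {in s, forall u, foldr gcdn m s %| u}.
Proof.
elim: s => [|a s [dvd_m dvd_s]] /=; first by [].
split; first exact: dvdn_trans (dvdn_gcdr _ _) dvd_m.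
move=> u /predU1P[-> | su]; first exact: dvdn_gcdl.
exact: dvdn_trans (dvdn_gcdr _ _) (dvd_s u su).
Qed.

Local Open Scope group_scope.

Lemma lmpf_cover (gT : finGroupType) (G : {group gT}) (S : {set gT}) x :
    locally_maximal_product_free G S -> x \in G -> x \notin S ->
  [|| x \in S * S, x \in S * S^-1, x \in S^-1 * S | x * x \in S].
Proof.
move=> [[sSG nzS pfS] maxS] Gx notSx; apply: contraR notSx.
rewrite !negb_or => /and4P[notSS notSSV notSVS notSxx].
have ext_pf : product_free G (x |: S).
  split; first by rewrite subUset sub1set Gx.
    by apply/set0Pn; exists x; rewrite setU11.
  move=> u v /setU1P[-> | Su] /setU1P[-> | Sv]; rewrite !inE negb_or.
  - apply/andP; split=> //; apply: contra notSSV => /eqP xx_x.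
    have -> : x = 1 by apply: (mulgI x); rewrite mulg1.
    by have /set0Pn[s Ss] := nzS; rewrite -(mulgV s) mem_mulg ?memV_invg.
  - apply/andP; split; last first.
      by apply: contra notSSV => Sxv; rewrite -(mulgK v x) mem_mulg ?memV_invg.
    apply: contra (pfS v v Sv Sv) => /eqP xv_x.
    have v1 : v = 1 by apply: (mulgI x); rewrite mulg1.
    by rewrite v1 mulg1 -v1.
  - apply/andP; split; last first.
      by apply: contra notSVS => Sux; rewrite -(mulKg u x) mem_mulg ?memV_invg.
    apply: contra (pfS u u Su Su) => /eqP ux_x.
    have u1 : u = 1 by apply: (mulIg x); rewrite mul1g.
    by rewrite u1 mulg1 -u1.
  - by rewrite pfS // andbT; apply: contra notSS => /eqP <-; rewrite mem_mulg.
by rewrite -(maxS _ ext_pf (subsetUr _ _)) setU11.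
Qed.

Lemma lmpf_sqr_mem (gT : finGroupType) (G H : {group gT}) (S : {set gT}) y :
    locally_maximal_product_free G S -> S \subset H -> y \in G -> y \notin H ->
  y * y \in S.
Proof.
move=> lmpf sSH Gy notHy.
have notSy : y \notin S by apply: contra notHy => /(subsetP sSH).
have sSVH : S^-1 \subset H by rewrite -invGid invSg.
have notH_prod (A B : {set gT}) : A \subset H -> B \subset H -> y \in A * B = false.
  move=> sAH sBH; apply/negbTE; apply: contra notHy.
  by move/(subsetP (mulgSS sAH sBH)); rewrite mulGid.
by have := lmpf_cover lmpf Gy notSy; rewrite !notH_prod.
Qed.

Lemma expgV_order (gT : finGroupType) (x : gT) b :
  b <= #[x] -> (x ^+ b)^-1 = x ^+ (#[x] - b).
Proof.
by move=> le_b; apply: (mulIg (x ^+ b)); rewrite mulVg -expgD subnK ?expg_order.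
Qed.

Definition cycle_exponents (gT : finGroupType) (g : gT) (A : {set gT}) :=
  [seq i <- iota 0 #[g] | g ^+ i \in A].

Section CycleExponents.

Variables (gT : finGroupType) (G : {group gT}) (S : {set gT}) (g : gT).
Hypotheses (lmpfS : locally_maximal_product_free G S) (genS : <<S>> = <[g]>).

Local Notation n := #[g].
Local Notation s := (cycle_exponents g S).

Lemma subset_cycle : S \subset <[g]>.
Proof. by rewrite -genS subset_gen. Qed.

Lemma cycle_subset : <[g]> \subset G.
Proof. by rewrite -genS gen_subG; case: lmpfS => [[]]. Qed.

Lemma mem_cycle_exponents i : (g ^+ i \in S) = (i %% n \in s).
Proof.
by rewrite mem_filter mem_iota add0n ltn_pmod ?order_gt0 // expg_mod_order !andbT.
Qed.

Lemma cycle_exponentsP t : t \in S -> exists2 a, a \in s & t = g ^+ a.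
Proof.
move=> St; have [a lt_an def_t] := cyclePmin (subsetP subset_cycle t St).
by exists a => //; rewrite -(modn_small lt_an) -mem_cycle_exponents -def_t.
Qed.

Lemma cycle_exponents_lt a : a \in s -> a < n.
Proof. by rewrite mem_filter mem_iota => /and3P[]. Qed.

Lemma cycle_exponents_sum_free : sum_free_mod n s.
Proof.
case: lmpfS => [[_ _ pfS] _].
apply/allP=> a sa; apply/allP=> b sb; rewrite -mem_cycle_exponents expgD.
by apply: pfS; rewrite mem_cycle_exponents modn_small ?cycle_exponents_lt.
Qed.

Lemma cycle_exponents_gcd : foldr gcdn n s = 1%N.
Proof.
set d := foldr gcdn n s; have [dvd_dn dvd_ds] := dvdn_foldr_gcdn n s.
have d_gt0 : 0 < d := dvdn_gt0 (order_gt0 g) dvd_dn.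
have sub_gd : <[g]> \subset <[g ^+ d]>.
  rewrite -genS gen_subG; apply/subsetP=> t /cycle_exponentsP[a sa ->].
  by rewrite -(divnK (dvd_ds a sa)) mulnC expgM mem_cycle.
have := subset_leq_card sub_gd; rewrite -!orderE orderXdiv // => le_n_nd.
apply/eqP; rewrite eqn_leq d_gt0 andbT leqNgt; apply/negP => d_gt1.
by have := ltn_Pdiv d_gt1 (order_gt0 g); rewrite ltnNge le_n_nd.
Qed.

Lemma cycle_exponents_covered : all (covered_mod n s) (iota 0 n).
Proof.
apply/allP=> i; rewrite mem_iota add0n => /andP[_ lt_in].
have Ggi : g ^+ i \in G := subsetP cycle_subset _ (mem_cycle g i).
have exp_eq m : g ^+ i = g ^+ m -> (m %% n == i).
  by move/eqP; rewrite eq_expg_mod_order modn_small // eq_sym.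
have inv_exp b : b \in s -> (g ^+ b)^-1 = g ^+ (n - b).
  by move/cycle_exponents_lt/ltnW/expgV_order.
have covered_by a b : a \in s -> b \in s ->
    (a + b) %% n == i \/ (a + n - b) %% n == i -> covered_mod n s i.
  move=> sa sb cov; apply/or3P; apply: Or32; apply/hasP; exists a => //.
  by apply/hasP; exists b => //; apply/orP.
have [Sgi | notSgi] := boolP (g ^+ i \in S).
  by apply/or3P; apply: Or31; rewrite -(modn_small lt_in) -mem_cycle_exponents.
case/or4P: (lmpf_cover lmpfS Ggi notSgi).
- case/mulsgP=> u v /cycle_exponentsP[a sa ->] /cycle_exponentsP[b sb ->].
  by rewrite -expgD => /exp_eq cov; apply: (covered_by a b) => //; left.
- case/mulsgP=> u v /cycle_exponentsP[a sa ->]; rewrite mem_invg.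
  case/cycle_exponentsP=> b sb /(canRL invgK) ->; rewrite inv_exp // -expgD.
  rewrite addnBA ?(ltnW (cycle_exponents_lt sb)) // => /exp_eq cov.
  by apply: (covered_by a b) => //; right.
- case/mulsgP=> u v; rewrite mem_invg.
  case/cycle_exponentsP=> a sa /(canRL invgK) -> /cycle_exponentsP[b sb ->].
  rewrite inv_exp // -expgD addnC addnBA ?(ltnW (cycle_exponents_lt sa)) //.
  by move/exp_eq=> cov; apply: (covered_by b a) => //; right.
- by move=> Sgii; apply/or3P; apply: Or33; rewrite -mem_cycle_exponents expgD.
Qed.

Lemma cycle_exponents_lmpf : lmpf_exponents n s.
Proof.
by rewrite /lmpf_exponents cycle_exponents_sum_free cycle_exponents_gcd eqxx
  cycle_exponents_covered.
Qed.

Lemma size_cycle_exponents : size s = #|S|.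
Proof.
have inj_exp : {in s &, injective (fun a => g ^+ a)}.
  move=> a b /cycle_exponents_lt lt_an /cycle_exponents_lt lt_bn /eqP.
  by rewrite eq_expg_mod_order !modn_small // => /eqP.
rewrite -(size_map (fun a => g ^+ a)).
have /card_uniqP <- : uniq [seq g ^+ a | a <- s].
  by rewrite (map_inj_in_uniq inj_exp) filter_uniq ?iota_uniq.
apply: eq_card => t; apply/mapP/idP => [[a sa ->] | /cycle_exponentsP //].
by rewrite mem_cycle_exponents modn_small ?cycle_exponents_lt.
Qed.

Lemma cycle_exponents3 : #|S| = 3%N ->
  exists a b c, [/\ s = [:: a; b; c], a < b < c & c < n].
Proof.
rewrite -size_cycle_exponents.
have sorted_s : sorted ltn s := sorted_filter ltn_trans _ (iota_ltn_sorted 0 n).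
have lt_s := @cycle_exponents_lt.
case: s sorted_s lt_s => [|a [|b [|c []]]] //= /and3P[lt_ab lt_bc _] lt_s _.
by exists a, b, c; rewrite lt_ab lt_bc lt_s // !inE eqxx !orbT.
Qed.

Lemma outer_conj_exponents x : x \in G -> x \notin <[g]> ->
  exists k j, [/\ k < n, j < n, g ^ x^-1 = g ^+ k & coset_squares_in n s k j].
Proof.
move=> Gx notgx; have sq_S := lmpf_sqr_mem lmpfS subset_cycle.
have outer y : y \in <[g]> -> y * x \in G /\ y * x \notin <[g]>.
  by move=> gy; rewrite !groupMl // (subsetP cycle_subset).
have Sxx := sq_S x Gx notgx; have [Ggx notggx] := outer g (cycle_id g).
have gx_cycle : g ^ x^-1 \in <[g]>.
  have -> : g ^ x^-1 = g^-1 * ((g * x) * (g * x)) * (x * x)^-1.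
    by rewrite conjgE invgK invMg !mulgA mulVg mul1g mulgK.
  have gxgx := subsetP subset_cycle _ (sq_S _ Ggx notggx).
  have gxx := subsetP subset_cycle _ Sxx.
  by rewrite groupM ?groupV // groupM ?groupV ?cycle_id.
have [k lt_kn def_k] := cyclePmin gx_cycle.
have [j lt_jn def_j] := cyclePmin (subsetP subset_cycle _ Sxx).
have conj_exp i : (g ^+ i) ^ x^-1 = g ^+ (k * i) by rewrite conjXg def_k -expgM.
exists k, j; split=> //; apply/and3P; split.
- have : (x * x) ^ x^-1 = x * x by rewrite conjgE invgK !mulgA mulgK.
  by rewrite def_j conj_exp => /eqP; rewrite eq_expg_mod_order (modn_small lt_jn).
- have : g ^ (x * x)^-1 = g.
    by rewrite def_j conjgE invgK mulgA -(commuteX j (commute_refl g)) mulgK.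
  by rewrite invMg conjgM def_k conj_exp -{2}(expg1 g) => /eqP; rewrite eq_expg_mod_order.
- apply/allP=> i _; rewrite -mem_cycle_exponents !expgD -conj_exp -def_j.
  have [Ggix notggix] := outer _ (mem_cycle g i).
  by have := sq_S _ Ggix notggix; rewrite conjgE invgK !mulgA mulgKV.
Qed.

End CycleExponents.

Lemma card_2group_dvdn8 (gT : finGroupType) (P : {group gT}) :
  2.-group P -> #|'Ohm_1(P)| <= 2 -> exponent P %| 4 -> #|P| %| 8.
Proof.
move=> pP le_Ohm_2 expP.
have [-> | ntP] := eqsVneq P 1; first by rewrite cards1.
have oOhm : #|'Ohm_1(P)| = 2%N.
  have ntOhm : 'Ohm_1(P) != 1 by rewrite Ohm1_eq1.
  have [_ dvd_2 _] := pgroup_pdiv (pgroupS (Ohm_sub 1 P) pP) ntOhm.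
  by apply/eqP; rewrite eqn_leq le_Ohm_2 dvdn_leq.
case/(prime_Ohm1P pP ntP)/orP: oOhm => [cycP | /andP[_ /eqP]].
  by rewrite -exponent_cyclic // (dvdn_trans expP).
case/quaternion_classP=> m m_gt2 /generators_quaternion[//|[x y] [oP Px ox _] _].
have : (2 ^ m.-1 %| 2 ^ 2)%N by rewrite -ox (dvdn_trans (dvdn_exponent Px)).
by rewrite oP -[8]/(2 ^ 3)%N !dvdn_Pexp2l // -ltnS (ltn_predK m_gt2).
Qed.

Lemma card_dvdn_Sylow (gT : finGroupType) (G : {group gT}) m :
    (forall p, p \in \pi(G) -> exists2 P : {group gT}, p.-Sylow(G) P & #|P| %| m) ->
  #|G| %| m.
Proof.
move=> sylP; apply/dvdn_partP => [|p piGp]; first exact: cardG_gt0.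
by have [P /card_Hall <-] := sylP p piGp.
Qed.

Lemma order_dvdn_part (gT : finGroupType) p (G P : {group gT}) e w :
  0 < e -> exponent G %| e -> p.-Sylow(G) P -> w \in P -> #[w] %| e`_p.
Proof.
move=> e_gt0 expG sylP Pw; have [sPG pP _] := and3P sylP.
rewrite -(part_pnat_id (mem_p_elt pP Pw)) partn_dvd //.
exact: dvdn_trans (dvdn_exponent (subsetP sPG w Pw)) expG.
Qed.

Section OddSquares.

Variables (gT : finGroupType) (G : {group gT}) (g : gT).
Hypotheses (og : #[g] = 6%N)
  (odd_sq : forall x, x \in G -> x \notin <[g]> -> exists2 i, odd i & x * x = g ^+ i).

Let pow1 m : (g ^+ m == 1) = (6 %| m)%N.
Proof. by rewrite -order_dvdn og. Qed.

Lemma odd_sq_exponent : exponent G %| 12.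
Proof.
apply/exponentP=> z Gz; apply/eqP; have [/cycleP[i ->] | notgz] := boolP (z \in <[g]>).
  by rewrite -expgM pow1 dvdn_mull.
have [i _ zz] := odd_sq Gz notgz.
by rewrite -[12]/(2 * 6)%N expgM expg2 zz -expgM pow1 dvdn_mull.
Qed.

Lemma odd_sq_involution z : z \in G -> z ^+ 2 = 1 -> z \in <[g ^+ 3]>.
Proof.
move=> Gz; have [/cycleP[i ->] | notgz] := boolP (z \in <[g]>).
  move/eqP; rewrite -expgM pow1 -[6]/(3 * 2)%N dvdn_pmul2r // => /divnK <-.
  by rewrite mulnC expgM mem_cycle.
have [i odd_i zz] := odd_sq Gz notgz.
rewrite expg2 zz => /eqP; rewrite pow1 => /(dvdn_trans (isT : 2 %| 6)%N).
by rewrite dvdn2 odd_i.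
Qed.

Lemma odd_sq_order3 z : z \in G -> z ^+ 3 = 1 -> z \in <[g ^+ 2]>.
Proof.
move=> Gz; have [/cycleP[i ->] | notgz] := boolP (z \in <[g]>).
  move/eqP; rewrite -expgM pow1 -[6]/(2 * 3)%N dvdn_pmul2r // => /divnK <-.
  by rewrite mulnC expgM mem_cycle.
have [i odd_i zz] := odd_sq Gz notgz => z3.
have /eqP : (z * z) ^+ 3 = 1 by rewrite -expg2 -expgM mulnC expgM z3 expg1n.
rewrite zz -expgM pow1 -[6]/(2 * 3)%N dvdn_pmul2r // dvdn2.
by rewrite odd_i.
Qed.

Lemma card_odd_sq_dvdn24 : #|G| %| 24.
Proof.
have og2 : #[g ^+ 3] = 2%N by rewrite orderXdiv og.
have og3 : #[g ^+ 2] = 3%N by rewrite orderXdiv og.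
apply: card_dvdn_Sylow => p; rewrite -pi_of_exponent.
move/(pi_of_dvd odd_sq_exponent isT); rewrite /= !inE => /orP[] /eqP ->.
  have [P sylP] := Sylow_exists 2 G; have [sPG pP _] := and3P sylP.
  exists P => //; apply: dvdn_trans (card_2group_dvdn8 pP _ _) _ => //.
    rewrite -og2 orderE (OhmE 1 pP) subset_leq_card // gen_subG.
    apply/subsetP=> z; rewrite !inE => /andP[Pz /eqP].
    exact: odd_sq_involution (subsetP sPG z Pz).
  apply/exponentP=> w Pw; apply/eqP; rewrite -order_dvdn.
  by rewrite (dvdn_trans (order_dvdn_part _ odd_sq_exponent sylP Pw)) ?p_part.
have [Q sylQ] := Sylow_exists 3 G; have [sQG pQ _] := and3P sylQ.
exists Q => //; apply: dvdn_trans (_ : #|Q| %| 3) _ => //.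
rewrite -og3 orderE cardSg //; apply/subsetP=> w Qw.
apply: odd_sq_order3 (subsetP sQG w Qw) _; apply/eqP; rewrite -order_dvdn.
by rewrite (dvdn_trans (order_dvdn_part _ odd_sq_exponent sylQ Qw)) ?p_part.
Qed.

End OddSquares.

Lemma card_inverted_cycle (gT : finGroupType) (G : {group gT}) (g : gT) :
    2 < #[g] -> (forall x, x \in G -> x \notin <[g]> -> g ^ x^-1 = g^-1) ->
  #|G| <= #[g] * 2.
Proof.
move=> og_gt2 inv_g; have [sGg | /subsetPn[x Gx notgx]] := boolP (G \subset <[g]>).
  by rewrite (leq_trans (subset_leq_card sGg)) // -orderE leq_pmulr.
have g_x : g ^ x = g^-1.
  by apply: invg_inj; rewrite invgK -conjVg -(inv_g x Gx notgx) conjgKV.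
have sGgx : G \subset <[g]> :|: <[g]> :* x.
  apply/subsetP=> y Gy; rewrite inE mem_rcoset orbC; apply/norP=> [[notgyx notgy]].
  have := inv_g _ (groupM Gy (groupVr Gx)) notgyx.
  rewrite invMg invgK conjgM g_x conjVg inv_g // invgK => /eqP.
  rewrite eq_sym eq_invg_mul -expg2 -order_dvdn => /dvdn_leq le_g2.
  by move: og_gt2; rewrite ltnNge le_g2.
rewrite (leq_trans (subset_leq_card sGgx)) // (leq_trans (leq_card_setU _ _)) //.
by rewrite card_rcoset -orderE muln2 -addnn.
Qed.

Theorem proposition2p1 (gT : finGroupType) (G : {group gT}) (S : {set gT}) :
  locally_maximal_product_free G S -> #|S| = 3 -> cyclic <<S>> -> #|G| <= 24.
Proof.
move=> lmpfS cardS /cyclicP[g genS].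
have [a [b [c [def_s lt_abc lt_cn]]]] := cycle_exponents3 genS cardS.
have lmpf_abc := cycle_exponents_lmpf lmpfS genS; rewrite def_s in lmpf_abc.
have [le_n15 cases] := lmpf_exponents3_cases lt_abc lt_cn lmpf_abc.
have outer_case y : y \in G -> y \notin <[g]> ->
    exists2 k, g ^ y^-1 = g ^+ k & inverting_or_odd6 #[g] [:: a; b; c] k.
  move=> Gy notgy.
  have [k [j [lt_kn lt_jn conj_k]]] := outer_conj_exponents lmpfS genS Gy notgy.
  by rewrite def_s => /(cases k j lt_kn lt_jn); exists k.
have [sGg | /subsetPn[x Gx notgx]] := boolP (G \subset <[g]>).
  by rewrite (leq_trans (subset_leq_card sGg)) // -orderE (leq_trans le_n15).
have [k _ /orP[/andP[n_8_10_12 _] | /andP[/eqP og6 odd_s]]] := outer_case x Gx notgx.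
  have /andP[n_gt2 n_le12] : 2 < #[g] <= 12.
    by move: n_8_10_12; rewrite !inE => /or3P[] /eqP ->.
  apply: leq_trans (card_inverted_cycle n_gt2 _) (leq_mul n_le12 (leqnn 2)).
  move=> y Gy notgy; have [ky ->] := outer_case y Gy notgy.
  rewrite /inverting_or_odd6 n_8_10_12 => /orP[/andP[_ /eqP ->] | /andP[/eqP og6]].
    by rewrite -invg_expg.
  by move: n_8_10_12; rewrite og6.
apply: dvdn_leq => //; apply: (card_odd_sq_dvdn24 og6) => y Gy notgy.
have /(cycle_exponentsP genS)[i] := lmpf_sqr_mem lmpfS (subset_cycle genS) Gy notgy.
by rewrite def_s => s_i ->; exists i => //; apply: (allP odd_s).
Qed.
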